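(* Let $(\mathcal X,d)$ be a metric space, $f:[n]\to\mathcal X$ a feature and $1\le k\le n$. Let $\mathcal R_{k,n}$ be the distribution of a multiset $S=\{i_1,\dots,i_k\}$ obtained by drawing $i_1,\dots,i_k$ independently and uniformly from $[n]$ (sampling with replacement). Then $$\mathbb E_{S\sim\mathcal U_{k,n}}\big[W(\phi_f^{[n]},\phi_f^S)\big]\le\mathbb E_{S\sim\mathcal R_{k,n}}\big[W(\phi_f^{[n]},\phi_f^S)\big].$$
   Context: For a nonempty set or multiset $S$ of elements of $[n]$, $\phi_f^S=\frac1{|S|}\sum_{i\in S}\delta(f(i))$ (counted with multiplicity), where $\delta(\cdot)$ is a Dirac mass. For finitely supported distributions $\phi,\psi$ on $\mathcal X$, $W(\phi,\psi)=\min_{\gamma}\mathbb E_{(x,y)\sim\gamma}[d(x,y)]$, minimum over couplings $\gamma$ of $\phi,\psi$ (Wasserstein-1 distance). $\mathcal U_{k,n}$ is the uniform distribution over size-$k$ subsets of $[n]$ (sampling without replacement). *)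

From HB Require Import structures.
From mathcomp Require Import all_boot all_order all_algebra.
From mathcomp Require Import boolp classical_sets reals.
Set Implicit Arguments. Unset Strict Implicit. Unset Printing Implicit Defensive.
Import Order.TTheory GRing.Theory Num.Theory.
Local Open Scope ring_scope.
Local Open Scope classical_set_scope.

Section Defs.
Variables (R : realType) (T : Type).

Definition is_metric (d : T -> T -> R) : Prop :=
  [/\ forall x, d x x = 0,
      forall x y, d x y = 0 -> x = y,
      forall x y, d x y = d y x &
      forall x y z, d x z <= d x y + d y z].

(* phi_f^S : the empirical distribution (1/|S|) sum_{i in S} delta(f i),
   counted with multiplicity; S is a (multi)set given as a sequence of indices. *)
Definition empirical (n : nat) (f : 'I_n -> T) (S : seq 'I_n) : T -> R :=
  fun x => (count (fun i => `[< f i = x >]) S)%:R / (size S)%:R.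

(* A finitely supported coupling on T x T, given as a finite list of
   weighted atoms ((x, y), w); its mass at (x,y) is the total weight of
   the atoms at (x,y). *)
Definition is_coupling (phi psi : T -> R) (g : seq ((T * T) * R)) : Prop :=
  [/\ all (fun p => 0 <= p.2) g,
      forall x, \sum_(p <- g | `[< p.1.1 = x >]) p.2 = phi x &
      forall y, \sum_(p <- g | `[< p.1.2 = y >]) p.2 = psi y].

Definition coupling_cost (d : T -> T -> R) (g : seq ((T * T) * R)) : R :=
  \sum_(p <- g) p.2 * d p.1.1 p.1.2.

(* Wasserstein-1 distance: optimal expected cost over couplings
   (the minimum is attained; we write it as an infimum). *)
Definition W1 (d : T -> T -> R) (phi psi : T -> R) : R :=
  inf [set c | exists g, is_coupling phi psi g /\ c = coupling_cost d g].

Definition EW_without (d : T -> T -> R) (n k : nat) (f : 'I_n -> T) : R :=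
  (\sum_(A : {set 'I_n} | #|A| == k)
      W1 d (empirical f (enum 'I_n)) (empirical f (enum A))) / ('C(n, k))%:R.

(* E_{S ~ R_{k,n}} [ W(phi_f^[n], phi_f^S) ] : k i.i.d. uniform draws *)
Definition EW_with (d : T -> T -> R) (n k : nat) (f : 'I_n -> T) : R :=
  (\sum_(t : k.-tuple 'I_n)
      W1 d (empirical f (enum 'I_n)) (empirical f (tval t))) / (n ^ k)%:R.

End Defs.

(* Couple the two sampling schemes: draw a uniform k-tuple t of
   indices and then a uniform k-subset A containing the entries of t.  The
   subset A is then uniform among k-subsets, and by symmetry the conditional
   mean of the empirical distribution of t given A is the empirical
   distribution of A.  Since W(mu, .) is convex, Jensen's inequality gives
   W(mu, phi^A) <= E[W(mu, phi^t) | A], and averaging over A yields the claim. *)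

From HB Require Import structures.
From mathcomp Require Import all_boot all_order all_algebra perm.
From mathcomp Require Import boolp classical_sets reals.
From mathcomp Require Import ring lra zify.
Import Order.TTheory GRing.Theory Num.Theory.
Set Implicit Arguments. Unset Strict Implicit. Unset Printing Implicit Defensive.

Lemma all_flatten (X : Type) (a : pred X) (ss : seq (seq X)) :
  all a (flatten ss) = all (all a) ss.
Proof. by elim: ss => //= s ss IHss; rewrite all_cat IHss. Qed.

Lemma count_sum_count_mem (X : finType) (P : pred X) (s : seq X) :
  count P s = \sum_(x | P x) count_mem x s.
Proof.
elim: s => [|y s IHs] /=; first by rewrite big1.
rewrite big_split /= -IHs; congr (_ + _).
case Py: (P y).
  by rewrite (bigD1 y) //= eqxx big1 // => x /andP[_]; rewrite eq_sym => /negbTE->.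
by rewrite big1 // => x Px; case: eqP => // yx; rewrite -yx Py in Px.
Qed.

Lemma card_set_map_inj (X Y : finType) (g : X -> Y) (s : seq X) :
  injective g -> #|[set y in map g s]| = #|[set x in s]|.
Proof.
move=> g_inj; rewrite -(card_imset _ g_inj); congr #|pred_of_set _|.
apply/setP => y; rewrite inE; apply/mapP/imsetP => [[x xs ->]|[x]].
  by exists x; rewrite ?inE.
by rewrite inE => xs ->; exists x.
Qed.

Lemma codom_enum_val (Y : finType) (A : {set Y}) : codom (@enum_val _ (mem A)) =i A.
Proof.
move=> y; apply/codomP/idP => [[i ->]|yA]; first exact: enum_valP.
by exists (enum_rank_in yA y); rewrite enum_rankK_in.
Qed.

Lemma big_tuple_subset (R : Type) (idx : R) (op : Monoid.com_law idx)
    (X Y : finType) (e : X -> Y) (A : {set Y}) m (G : m.-tuple Y -> R) :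
  injective e -> codom e =i A ->
  \big[op/idx]_(t : m.-tuple Y | [set y in t] \subset A) G t =
  \big[op/idx]_(h : m.-tuple X) G (map_tuple e h).
Proof.
move=> e_inj codom_e.
have map_inj : injective (map_tuple e : m.-tuple X -> _).
  by move=> h1 h2 /(congr1 val) /(inj_map e_inj) /val_inj.
rewrite -(big_imset _ (in2W map_inj)) /=; apply: eq_bigl => t.
apply/idP/imsetP => [t_sub | [h _ ->]].
  have /subset_mapP [s _ t_map] : {subset t <= map e (enum X)}.
    by move=> y yt; rewrite -codomE codom_e (fintype.subsetP t_sub) ?inE.
  have s_size : size s == m by rewrite -(size_map e) -t_map size_tuple.
  by exists (Tuple s_size) => //; apply: val_inj.
apply/fintype.subsetP => y; rewrite inE => /mapP [x _ ->].
by rewrite -codom_e codom_f.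
Qed.

Lemma card_supersets (X : finType) (C : {set X}) k : #|C| <= k <= #|X| ->
  #|[set B : {set X} | C \subset B & #|B| == k]| = 'C(#|X| - #|C|, k - #|C|).
Proof.
case/andP=> le_C_k le_k_X; have cardC := cardsC C.
have -> : [set B : {set X} | C \subset B & #|B| == k] =
    (@finset.setC X) @^-1: [set B : {set X} | B \subset ~: C & #|B| == #|X| - k].
  apply/setP => B; rewrite !inE finset.setCS; congr (_ && _).
  by have cardB := cardsC B; apply/eqP/eqP; lia.
rewrite card_preimset; last exact: finset.setC_inj.
rewrite cards_draws -bin_sub; first by congr 'C(_, _); lia.
lia.
Qed.

Local Open Scope ring_scope.

Section TupleSymmetry.
Variables (R : numDomainType) (X : finType) (m : nat) (w : nat -> R).

Lemma sum_tuple_count_mem_sym (x y : X) :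
  \sum_(h : m.-tuple X) w #|[set z in h]| * (count_mem x h)%:R =
  \sum_(h : m.-tuple X) w #|[set z in h]| * (count_mem y h)%:R.
Proof.
have swapK : involutive (map_tuple (tperm x y) : m.-tuple X -> _).
  by move=> h; apply: val_inj; rewrite /= -map_comp (eq_map (tpermK x y)) map_id.
rewrite (reindex_inj (inv_inj swapK)); apply: eq_bigr => h _ /=.
rewrite card_set_map_inj ?count_map; last exact: perm_inj.
congr (_ * _%:R); apply: eq_count => z /=.
by rewrite -(inj_eq (@perm_inj _ (tperm x y))) tpermK tpermL.
Qed.

Lemma sum_tuple_count_mem (x : X) : #|X| = m ->
  \sum_(h : m.-tuple X) w #|[set z in h]| * (count_mem x h)%:R =
  \sum_(h : m.-tuple X) w #|[set z in h]|.
Proof.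
move=> cardX; have m_neq0 : m%:R != 0 :> R.
  by rewrite pnatr_eq0 -cardX -lt0n; apply/card_gt0P; exists x.
apply: (mulfI m_neq0); rewrite -{1}cardX mulr_natl -sumr_const.
rewrite -(eq_bigr _ (fun y _ => sum_tuple_count_mem_sym y x)).
rewrite exchange_big mulr_sumr; apply: eq_bigr => h _.
rewrite -mulr_sumr -natr_sum -count_sum_count_mem count_predT size_tuple.
by rewrite mulr_natl mulr_natr.
Qed.

End TupleSymmetry.

Lemma is_metric_ge0 (R : realType) (T : Type) (d : T -> T -> R) :
  is_metric d -> forall x y, 0 <= d x y.
Proof.
by case=> d_xx _ d_sym d_tri x y; have := d_tri x y x; rewrite d_xx (d_sym y x); lra.
Qed.

Section Wasserstein.
Variables (R : realType) (T : Type) (d : T -> T -> R).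
Hypothesis d_ge0 : forall x y, 0 <= d x y.

Lemma coupling_cost_ge0 (g : seq ((T * T) * R)) :
  all (fun p => 0 <= p.2) g -> 0 <= coupling_cost d g.
Proof.
rewrite /coupling_cost; elim: g => [|p g IHg] /=; first by rewrite big_nil.
by case/andP=> p_ge0 /IHg g_ge0; rewrite big_cons addr_ge0 ?mulr_ge0.
Qed.

Let cost_set (phi psi : T -> R) :=
  [set c | exists g, is_coupling phi psi g /\ c = coupling_cost d g]%classic.

Let cost_set_lbound phi psi : has_lbound (cost_set phi psi).
Proof. by exists 0 => _ [g [[g_ge0 _ _] ->]]; apply: coupling_cost_ge0. Qed.

Lemma W1_le_cost phi psi g : is_coupling phi psi g -> W1 d phi psi <= coupling_cost d g.
Proof. by move=> cpl; apply: (ge_inf (cost_set_lbound phi psi)); exists g. Qed.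

Lemma W1_approx phi psi eps : 0 < eps -> (exists g, is_coupling phi psi g) ->
  exists g, is_coupling phi psi g /\ coupling_cost d g < W1 d phi psi + eps.
Proof.
move=> eps_gt0 [g0 cpl0].
have inf_cost : has_inf (cost_set phi psi).
  by split; [exists (coupling_cost d g0), g0 | apply: cost_set_lbound].
by have [_ [g [cpl ->]] lt_eps] := inf_adherent eps_gt0 inf_cost; exists g.
Qed.

Definition mix_coupling (I : finType) (a : I -> R) (G : I -> seq ((T * T) * R)) :=
  flatten [seq [seq (p.1, a i * p.2) | p <- G i] | i <- index_enum I].

Lemma sum_mix_coupling (I : finType) (a : I -> R) G (Q : pred (T * T))
    (H : (T * T) * R -> R) :
  (forall c p, H (p.1, c * p.2) = c * H p) ->
  \sum_(p <- mix_coupling a G | Q p.1) H p = \sum_i a i * \sum_(p <- G i | Q p.1) H p.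
Proof.
move=> H_homog; rewrite big_flatten big_map; apply: eq_bigr => i _.
by rewrite big_map mulr_sumr; apply: eq_bigr => p _; rewrite H_homog.
Qed.

Section Mixture.
Variables (I : finType) (a : I -> R) (G : I -> seq ((T * T) * R)).
Variables (mu nu0 : T -> R) (nu : I -> T -> R).
Hypotheses (a_ge0 : forall i, 0 <= a i) (a_sum1 : \sum_i a i = 1).
Hypothesis nu0E : forall y, nu0 y = \sum_i a i * nu i y.
Hypothesis cplG : forall i, is_coupling mu (nu i) (G i).

Lemma mix_coupling_is_coupling : is_coupling mu nu0 (mix_coupling a G).
Proof.
split.
- rewrite all_flatten all_map; apply/allT => i /=; rewrite all_map.
  by have [G_ge0 _ _] := cplG i; apply: sub_all G_ge0 => p /= /(mulr_ge0 (a_ge0 i)).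
- move=> x; rewrite (@sum_mix_coupling _ _ _ (fun q => `[< q.1 = x >]) snd) //=.
  by under eq_bigr => i _ do have [_ -> _] := cplG i; rewrite -mulr_suml a_sum1 mul1r.
- move=> y; rewrite (@sum_mix_coupling _ _ _ (fun q => `[< q.2 = y >]) snd) //= nu0E.
  by apply: eq_bigr => i _; have [_ _ ->] := cplG i.
Qed.

Lemma coupling_cost_mix :
  coupling_cost d (mix_coupling a G) = \sum_i a i * coupling_cost d (G i).
Proof. by apply: (@sum_mix_coupling _ _ _ predT) => c p; rewrite mulrA. Qed.

End Mixture.

Lemma W1_convex (I : finType) (a : I -> R) (mu nu0 : T -> R) (nu : I -> T -> R) :
  (forall i, 0 <= a i) -> \sum_i a i = 1 -> (forall y, nu0 y = \sum_i a i * nu i y) ->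
  (forall i, exists g, is_coupling mu (nu i) g) ->
  W1 d mu nu0 <= \sum_i a i * W1 d mu (nu i).
Proof.
move=> a_ge0 a_sum1 nu0E cpl_ex; apply/ler_addgt0Pr => eps eps_gt0.
have /choice [G cplG] i : exists g, is_coupling mu (nu i) g /\
    coupling_cost d g < W1 d mu (nu i) + eps.
  exact: W1_approx (cpl_ex i).
have cpl := mix_coupling_is_coupling a_ge0 a_sum1 nu0E (fun i => (cplG i).1).
apply: le_trans (W1_le_cost cpl) _; rewrite coupling_cost_mix.
rewrite -[eps]mul1r -a_sum1 mulr_suml -big_split /=.
by apply: ler_sum => i _; rewrite -mulrDr ler_wpM2l // ltW // (cplG i).2.
Qed.

Lemma W1_mean_le_kernel (I J : finType) (P : pred I) (mu : T -> R)
    (nu : I -> T -> R) (rho : J -> T -> R) (K : I -> J -> R) (lam : R) :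
  (forall i j, 0 <= K i j) ->
  (forall j, \sum_(i | P i) K i j = 1) ->
  (forall i, P i -> \sum_j K i j = lam) ->
  (forall i x, P i -> \sum_j K i j * rho j x = lam * nu i x) ->
  (forall j, exists g, is_coupling mu (rho j) g) -> (0 < #|J|)%N ->
  (\sum_(i | P i) W1 d mu (nu i)) / #|P|%:R <= (\sum_j W1 d mu (rho j)) / #|J|%:R.
Proof.
move=> K_ge0 K_sum_row K_sum_col K_mean cpl_ex J_gt0.
have lamP : lam * #|P|%:R = #|J|%:R.
  have -> : #|J|%:R = \sum_j \sum_(i | P i) K i j :> R.
    by rewrite (eq_bigr (fun=> 1)) // sumr_const.
  by rewrite exchange_big (eq_bigr (fun=> lam) K_sum_col) sumr_const mulr_natr.
have lam_gt0 : 0 < lam.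
  rewrite ltNge; apply: contraTN J_gt0 => /mulr_le0_ge0/(_ (ler0n R #|P|)).
  by rewrite lamP lern0 => /eqP ->.
have W1_le i : P i -> lam * W1 d mu (nu i) <= \sum_j K i j * W1 d mu (rho j).
  move=> Pi; rewrite -ler_pdivlMl //= mulr_sumr.
  under eq_bigr do rewrite mulrA [_ * K i _]mulrC.
  apply: W1_convex => [j|||//]; first by rewrite divr_ge0 ?K_ge0 ?ltW.
    by rewrite -mulr_suml K_sum_col // mulfV ?gt_eqF.
  move=> x; under eq_bigr do rewrite mulrAC.
  by rewrite -mulr_suml K_mean // mulrC mulKf ?gt_eqF.
have sum_le : lam * \sum_(i | P i) W1 d mu (nu i) <= \sum_j W1 d mu (rho j).
  rewrite mulr_sumr; apply: le_trans (ler_sum _ W1_le) _.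
  by rewrite exchange_big /=; under eq_bigr do rewrite -mulr_suml K_sum_row mul1r.
rewrite -lamP invfM mulrA ler_wpM2r ?invr_ge0 //.
by rewrite ler_pdivlMr // mulrC.
Qed.

End Wasserstein.

Section EmpiricalCoupling.
Variables (R : realType) (T : Type) (n : nat) (f : 'I_n -> T).

Lemma empirical_coupling_exists (s1 s2 : seq 'I_n) : s1 != [::] -> s2 != [::] ->
  exists g, is_coupling (empirical R f s1) (empirical R f s2) g.
Proof.
rewrite -!size_eq0 -!(eqr_nat R) => s1_neq0 s2_neq0.
pose c : R := ((size s1)%:R * (size s2)%:R)^-1.
have sum_const (s : seq 'I_n) (P : pred 'I_n) :
    \sum_(i <- s) (if P i then c else 0) = (count P s)%:R * c.
  by rewrite -big_mkcond big_const_seq iter_addr_0 mulr_natl.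
exists [seq ((f i, f j), c) | i <- s1, j <- s2]; split.
- by apply/all_allpairsP => i j _ _ /=; rewrite invr_ge0 mulr_ge0.
- move=> x; rewrite big_mkcond big_allpairs_dep /=.
  under eq_bigr do rewrite big_const_seq iter_addr_0 count_predT.
  rewrite sumrMnl sum_const /empirical /c -mulr_natr; field.
  by rewrite s1_neq0 s2_neq0.
- move=> y; rewrite big_mkcond big_allpairs_dep /= exchange_big /=.
  under eq_bigr do rewrite big_const_seq iter_addr_0 count_predT.
  rewrite sumrMnl sum_const /empirical /c -mulr_natr; field.
  by rewrite s1_neq0 s2_neq0.
Qed.
End EmpiricalCoupling.

Section SupersetKernel.
Variables (R : numFieldType) (n k : nat).

Definition superset_weight (m : nat) : R := ('C(n - m, k - m))%:R^-1.

(* The conditional probability of A given t, when t is a uniform k-tuple and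
   A is then a uniform k-subset containing the entries of t. *)
Definition superset_kernel (A : {set 'I_n}) (t : k.-tuple 'I_n) : R :=
  ([set x in t] \subset A)%:R * superset_weight #|[set x in t]|.

(* The common value of the sums \sum_t superset_kernel A t over k-subsets A,
   computed by relabelling A as 'I_k. *)
Definition superset_kernel_mass : R :=
  \sum_(h : k.-tuple 'I_k) superset_weight #|[set x in h]|.

Lemma superset_kernel_ge0 A t : 0 <= superset_kernel A t.
Proof. by rewrite mulr_ge0 ?invr_ge0. Qed.

Lemma sum_superset_kernel_sets t : (k <= n)%N ->
  \sum_(A : {set 'I_n} | #|A| == k) superset_kernel A t = 1.
Proof.
move=> le_k_n; set C := [set x in t].
have le_C_k : (#|C| <= k)%N by rewrite cardsE -{2}(size_tuple t) card_size.
rewrite -mulr_suml.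
have -> : \sum_(A : {set 'I_n} | #|A| == k) (C \subset A)%:R =
    #|[set A : {set 'I_n} | C \subset A & #|A| == k]|%:R :> R.
  rewrite -sum1_card natr_sum big_mkcond [RHS]big_mkcond /=.
  by apply: eq_bigr => A _; rewrite inE andbC; case: (_ == k); case: (C \subset A).
rewrite card_supersets ?le_C_k ?card_ord // mulfV // pnatr_eq0 -lt0n bin_gt0.
exact: leq_sub2r.
Qed.

Lemma sum_superset_kernel_count (A : {set 'I_n}) (P : pred 'I_n) : #|A| = k ->
  \sum_t superset_kernel A t * (count P t)%:R =
  superset_kernel_mass * (count P (enum A))%:R.
Proof.
move=> cardA.
transitivity (\sum_(t : k.-tuple 'I_n | [set x in t] \subset A)
    superset_weight #|[set x in t]| * (count P t)%:R).
  rewrite [RHS]big_mkcond; apply: eq_bigr => t _ /=.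
  by rewrite /superset_kernel; case: (_ \subset A); rewrite ?mul1r ?mul0r.
rewrite (big_tuple_subset _ _ enum_val_inj (codom_enum_val A)) /=.
under eq_bigr do rewrite (card_set_map_inj _ enum_val_inj) count_map
  count_sum_count_mem natr_sum mulr_sumr.
rewrite exchange_big -sum1_count big_enum_cond big_enum_val_cond natr_sum mulr_sumr.
apply: eq_bigr => j _; rewrite mulr1 sum_tuple_count_mem ?card_ord //.
by rewrite /superset_kernel_mass cardA.
Qed.

Lemma sum_superset_kernel (A : {set 'I_n}) : (0 < k)%N -> #|A| = k ->
  \sum_t superset_kernel A t = superset_kernel_mass.
Proof.
move=> k_gt0 cardA; have := sum_superset_kernel_count predT cardA.
under eq_bigr do rewrite count_predT size_tuple.
rewrite count_predT -cardE cardA -mulr_suml.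
by apply: mulIf; rewrite pnatr_eq0 -lt0n.
Qed.

End SupersetKernel.

Lemma sum_superset_kernel_empirical (R : realType) (T : Type) n k (f : 'I_n -> T)
    (A : {set 'I_n}) (x : T) : #|A| = k ->
  \sum_(t : k.-tuple 'I_n) superset_kernel R A t * empirical R f t x =
  superset_kernel_mass R n k * empirical R f (enum A) x.
Proof.
move=> cardA; rewrite /empirical -cardE cardA.
under eq_bigr do rewrite size_tuple mulrA.
by rewrite -mulr_suml sum_superset_kernel_count // mulrA.
Qed.

Theorem lemma2p3 (R : realType) (T : Type) (d : T -> T -> R)
  (hd : is_metric d) (n k : nat) (f : 'I_n -> T)
  (hk1 : (1 <= k)%N) (hkn : (k <= n)%N) :
  EW_without d k f <= EW_with d k f.
Proof.
have n_gt0 : (0 < n)%N := leq_trans hk1 hkn.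
rewrite /EW_without /EW_with.
rewrite -[n in 'C(n, k)]card_ord -card_draws cardsE.
rewrite -[n in (n ^ k)%N]card_ord -card_tuple.
apply: (W1_mean_le_kernel (is_metric_ge0 hd) (K := @superset_kernel R n k)
    (lam := superset_kernel_mass R n k)).
- exact: superset_kernel_ge0.
- by move=> t; apply: sum_superset_kernel_sets.
- by move=> A /eqP; apply: sum_superset_kernel.
- by move=> A x /eqP; apply: sum_superset_kernel_empirical.
- move=> t; apply: empirical_coupling_exists.
    by rewrite -size_eq0 size_enum_ord -lt0n.
  by rewrite -size_eq0 size_tuple -lt0n.
- by rewrite card_tuple card_ord expn_gt0 n_gt0.
Qed.
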